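(* For the weighted linear tensor product problem $S_{\boldsymbol\gamma}=\{S_{d,\boldsymbol\gamma}\}$ described in the context, exponential uniform weak tractability (EXP-UWT) holds if and only if $$\lim_{j\to\infty}\frac{\ln\big(\ln\frac1{\lambda_j}\big)}{\ln(\ln j)}=\infty\quad\text{and}\quad \lim_{j\to\infty}\frac{\ln\big(\ln\frac1{\gamma_j}\big)}{\ln j}=\infty.$$
   Context: Let $H_1$ be a separable infinite-dimensional Hilbert space, $G_1$ a Hilbert space and $S_1:H_1\to G_1$ a compact linear operator. Let $\{(\lambda_j,e_j)\}_{j\in\mathbb N}$ be the eigenpairs of $W_1=S_1^*S_1$, with $\{e_j\}$ an orthonormal basis of $H_1$ and $\lambda_1\ge\lambda_2\ge\cdots\ge0$; assume $\lambda_1=1$, $\lambda_2>0$, and $\lambda_j\to0$. (If $\lambda_j=0$ we set $\ln\frac1{\lambda_j}=\infty$.) Let the weights satisfy $1\ge\gamma_1\ge\gamma_2\ge\cdots>0$. For $\gamma\in(0,1]$ let $H_{1,\gamma}$ be $H_1$ with inner product $\langle f,g\rangle_{H_{1,\gamma}}=\langle f_0,g_0\rangle_{H_1}+\gamma^{-1}\langle f_1,g_1\rangle_{H_1}$, where $f_0$ is the orthogonal projection of $f$ onto $\mathrm{span}\{e_1\}$ and $f_1=f-f_0$. For $d\in\mathbb N$ let $S_{d,\boldsymbol\gamma}=S_1\otimes\cdots\otimes S_1$ act from $H_{d,\boldsymbol\gamma}=H_{1,\gamma_1}\otimes\cdots\otimes H_{1,\gamma_d}$ to $G_d=G_1^{\otimes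 d}$. In the worst case setting with algorithms using $n$ arbitrary (possibly adaptive) continuous linear functionals, the information complexity $n(\varepsilon,S_{d,\boldsymbol\gamma})$ (minimal $n$ with $n$-th minimal worst case error $\le\varepsilon$; initial error is $1$) equals $\big|\{\mathbf j\in\mathbb N^d:\prod_{k=1}^d\lambda_{k,j_k}>\varepsilon^2\}\big|$, where $\lambda_{k,1}=1$ and $\lambda_{k,j}=\gamma_k\lambda_j$ for $j\ge2$. For $s,t>0$, EXP-$(s,t)$-WT means $\lim_{d+\varepsilon^{-1}\to\infty}\frac{\ln n(\varepsilon,S_{d,\boldsymbol\gamma})}{d^t+(\ln\varepsilon^{-1})^s}=0$ (over $d\in\mathbb N$, $\varepsilon\in(0,1)$); EXP-UWT means EXP-$(s,t)$-WT holds for all $s>0$ and $t>0$. *)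

From HB Require Import structures.
From mathcomp Require Import all_boot all_order all_algebra.
From mathcomp Require Import reals exp.
From Stdlib Require Import ClassicalEpsilon.
Set Implicit Arguments. Unset Strict Implicit. Unset Printing Implicit Defensive.
Import Order.TTheory GRing.Theory Num.Theory.
Local Open Scope ring_scope.

(* Sequences are indexed from 1 as in the paper: lam j = lambda_j, gam k = gamma_k
   for j, k >= 1; the value at index 0 is ignored. *)

(* univariate eigenvalue of the k-th factor (k : 'I_d corresponds to paper index k+1):
   lambda_{k,1} = 1, lambda_{k,j} = gamma_k * lambda_j for j >= 2 *)
Definition lamk (R : realType) (lam gam : nat -> R) (k : nat) (j : nat) : R :=
  if j == 1%N then 1 else gam k * lam j.

Definition big_eig_set (R : realType) (lam gam : nat -> R) (d : nat) (eps : R)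
  (j : {ffun 'I_d -> nat}) : Prop :=
  (forall k : 'I_d, (1 <= j k)%N) /\
  \prod_(k < d) lamk lam gam k.+1 (j k) > eps ^+ 2.

Arguments big_eig_set {R} lam gam d eps j.

Definition card_is (T : eqType) (P : T -> Prop) (m : nat) : Prop :=
  exists s : seq T, [/\ uniq s, (forall x, x \in s <-> P x) & size s = m].

(* the cardinality of P (junk value if P is infinite) *)
Definition cardP (T : eqType) (P : T -> Prop) : nat :=
  epsilon (inhabits 0%N) (fun m => card_is P m).

Definition info_compl (R : realType) (lam gam : nat -> R) (eps : R) (d : nat) : nat :=
  cardP (big_eig_set lam gam d eps).

Definition EXP_WT (R : realType) (lam gam : nat -> R) (s t : R) : Prop :=
  forall eta : R, 0 < eta -> exists M : R, forall (d : nat) (eps : R),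
    (1 <= d)%N -> 0 < eps < 1 -> M < d%:R + eps^-1 ->
    `| ln ((info_compl lam gam eps d)%:R) /
       (powR d%:R t + powR (ln eps^-1) s) | < eta.

Definition EXP_UWT (R : realType) (lam gam : nat -> R) : Prop :=
  forall s t : R, 0 < s -> 0 < t -> EXP_WT lam gam s t.

(* lim_{j -> oo} ln(ln(1/lambda_j)) / ln(ln j) = oo,
   with the convention ln(1/0) = oo (so lambda_j = 0 gives the value oo) *)
Definition lam_cond (R : realType) (lam : nat -> R) : Prop :=
  forall M : R, exists J : nat, forall j : nat, (J <= j)%N ->
    lam j = 0 \/ (0 < lam j < 1 /\ M * ln (ln (j%:R)) <= ln (ln (lam j)^-1)).

Definition gam_cond (R : realType) (gam : nat -> R) : Prop :=
  forall M : R, exists J : nat, forall j : nat, (J <= j)%N ->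
    gam j < 1 /\ M * ln (j%:R) <= ln (ln (gam j)^-1).

From HB Require Import structures.
From mathcomp Require Import all_boot all_order all_algebra.
From mathcomp Require Import reals exp.
From mathcomp Require Import boolp sequences.
From mathcomp Require Import ring lra.
From Stdlib Require Import ClassicalEpsilon.
Import Order.TTheory GRing.Theory Num.Theory.
Local Open Scope ring_scope.
Set Implicit Arguments. Unset Strict Implicit.

(* Write a = ln (1/eps).  A multi-index j is counted by n(eps, d) only if every
   coordinate j_k >= 2 satisfies gamma_(k+1) > eps^2 and lambda_(j_k) > eps^2.
   Sufficiency: if both conditions hold with rate M, these inequalities force
   k + 1 < (2a)^(1/M) and ln j_k < (2a)^(1/M) (up to finitely many exceptions), so
   ln n(eps, d) <= (C + (2a)^(1/M))^2, which is o(a^s) for M = 4/s.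
   Necessity: for d = 1 and eps = gamma_1 lambda_j / 2 the indices 1, ..., j are
   counted, so EXP-(s,1)-WT for all s gives ln j << (ln (1/lambda_j))^s; for
   eps = (gamma_d lambda_2)^d / 2 all of {1,2}^d is counted, so EXP-(s,1/2)-WT for
   all s gives d << (d ln (1/gamma_d))^s. *)

Section Cardinality.
Variables (T : eqType) (P : T -> Prop).

Lemma card_is_uniq m m' : card_is P m -> card_is P m' -> m = m'.
Proof.
case=> s [us ms <-] [s' [us' ms' <-]].
apply: perm_size; apply: uniq_perm => // x.
by apply/idP/idP => [/ms/ms' | /ms'/ms].
Qed.

Lemma cardP_eq m : card_is P m -> cardP P = m.
Proof.
by move=> Pm; apply: card_is_uniq (epsilon_spec _ _ (ex_intro _ m Pm)) Pm.
Qed.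

Lemma card_is_le_size (s : seq T) :
  (forall x, P x -> x \in s) -> exists2 m, card_is P m & (m <= size s)%N.
Proof.
move=> Ps; set s' := undup [seq x <- s | `[< P x >]].
exists (size s'); last by rewrite (leq_trans (size_undup _)) // size_filter count_size.
exists s'; split; rewrite ?undup_uniq // => x.
rewrite mem_undup mem_filter; split=> [/andP[/asboolP //] | Px].
by rewrite Ps // andbT; apply/asboolP.
Qed.

Lemma size_le_card_is (s : seq T) m :
  uniq s -> (forall x, x \in s -> P x) -> card_is P m -> (size s <= m)%N.
Proof.
move=> us sP [s' [_ s'P <-]].
by apply: uniq_leq_size => // x /sP /s'P.
Qed.

End Cardinality.

(* Such functions are images of functions f : 'I_K -> 'I_N.+1
   under f |-> (k |-> f k + 1 if k < K, 1 otherwise). *)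
Lemma card_is_box d K N (P : {ffun 'I_d -> nat} -> Prop) :
  (forall j, P j -> forall k : 'I_d, (1 <= j k <= N.+1)%N /\ ((K <= k)%N -> j k = 1%N)) ->
  exists2 m, card_is P m & (m <= N.+1 ^ K)%N.
Proof.
move=> Pbox.
pose F (f : {ffun 'I_K -> 'I_N.+1}) : {ffun 'I_d -> nat} :=
  [ffun k : 'I_d => if insub (val k) is Some k' then (f k').+1 else 1%N].
suff PF j : P j -> j \in [seq F f | f <- enum {ffun 'I_K -> 'I_N.+1}].
  have [m Pm] := card_is_le_size PF.
  by rewrite size_map -cardE card_ffun !card_ord; exists m.
move=> Pj; pose f : {ffun 'I_K -> 'I_N.+1} :=
  [ffun k' : 'I_K => inord (if insub (val k') is Some k then (j k).-1 else 0%N)].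
suff -> : j = F f by apply: map_f; rewrite mem_enum.
apply/ffunP => k; have [/andP[jk1 jkN] jkK] := Pbox j Pj k.
rewrite !ffunE; case: insubP => [k' _ k'k | ]; last by rewrite -leqNgt => /jkK.
rewrite ffunE; case: insubP => [k1 _ k1k | ]; last by rewrite k'k ltn_ord.
have -> : k1 = k by apply: val_inj; rewrite k1k.
by rewrite inordK ?prednK // -ltnS prednK.
Qed.

Section RealInequalities.
Variable R : realType.
Implicit Types (c d eta k r s t u w x y z M : R).

Lemma ln_natr_ge0 n : 0 <= ln (n%:R : R).
Proof. by case: n => [|n]; [rewrite ln0 | apply: ln_ge0; rewrite ler1n]. Qed.

Lemma ler_ln_natr m n : (0 < m)%N -> (m <= n)%N -> ln (m%:R : R) <= ln n%:R.
Proof. by move=> m0 mn; rewrite ler_ln ?posrE ?ltr0n ?ler_nat // (leq_trans m0). Qed.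

Lemma ln_natr_le_expn m N K :
  (m <= N.+1 ^ K)%N -> ln (m%:R : R) <= K%:R * ln N.+1%:R.
Proof.
case: m => [|m] mle; first by rewrite ln0 // mulr_ge0 ?ln_natr_ge0.
by rewrite mulr_natl -lnXn // -natrX ler_ln_natr.
Qed.

Lemma ln2_le1 : ln (2 : R) <= 1.
Proof. by have := @le_ln1Dx R 1; apply; lra. Qed.

Lemma sq_half_lt y : 0 < y -> y <= 1 -> (y / 2) ^+ 2 < y.
Proof.
move=> y0 y1; have : y * y <= y by rewrite ler_piMl ?(ltW y0).
nra.
Qed.

Lemma powRVK x r : 0 <= x -> r != 0 -> (x `^ r^-1) `^ r = x.
Proof. by move=> x0 r0; rewrite -powRrM mulVf // powRr1. Qed.

Lemma ln_inv_lt_of_sq_lt x z : 0 < x -> x ^+ 2 < z -> ln z^-1 < 2 * ln x^-1.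
Proof.
move=> x0 xz; have z0 : 0 < z by rewrite (lt_trans _ xz) ?exprn_gt0.
rewrite mulr_natl -lnXn ?invr_gt0 // exprVn ltr_ln ?posrE ?invr_gt0 ?exprn_gt0 //.
by rewrite ltf_pV2 ?posrE ?exprn_gt0.
Qed.

Lemma sq_le_quartic c k u : 0 <= c -> 0 < k -> 0 <= u ->
  (c + u) ^+ 2 <= k * u ^+ 4 + ((c + 1) ^+ 2 + (c + 1) ^+ 4 / (4 * k)).
Proof.
move=> c0 k0 u0.
have sq_le : (c + u) ^+ 2 <= (c + 1) ^+ 2 * u ^+ 2 + (c + 1) ^+ 2.
  have := mulr_ge0 c0 (sqr_ge0 (u - 1)); have := mulr_ge0 (sqr_ge0 c) (sqr_ge0 u).
  rewrite !expr2 => ? ?; nra.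
suff amgm : (c + 1) ^+ 2 * u ^+ 2 <= k * u ^+ 4 + (c + 1) ^+ 4 / (4 * k) by lra.
rewrite -subr_ge0.
have -> : k * u ^+ 4 + (c + 1) ^+ 4 / (4 * k) - (c + 1) ^+ 2 * u ^+ 2 =
          (2 * k * u ^+ 2 - (c + 1) ^+ 2) ^+ 2 / (4 * k) by field; rewrite gt_eqF.
by rewrite divr_ge0 ?sqr_ge0 // mulr_ge0 ?(ltW k0).
Qed.

Lemma lt_root_of_sq_lt M0 w z x : 0 < M0 -> 0 < w -> 0 < x -> x ^+ 2 < z -> z < 1 ->
  M0 * ln w <= ln (ln z^-1) -> w < (2 * ln x^-1) `^ M0^-1.
Proof.
move=> M00 w0 x0 xz z1 hM.
have z0 : 0 < z by rewrite (lt_trans _ xz) ?exprn_gt0.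
have lnz0 : 0 < ln z^-1 by rewrite ln_gt0 // invf_gt1.
have lnz_lt := ln_inv_lt_of_sq_lt x0 xz.
have a0 : 0 < 2 * ln x^-1 := lt_trans lnz0 lnz_lt.
rewrite -ltr_ln ?posrE ?powR_gt0 // ln_powR mulrC ltr_pdivlMr // mulrC.
by rewrite (le_lt_trans hM) // ltr_ln ?posrE.
Qed.

Lemma lnln_le_of_lt_powR M y c x : 1 <= M -> 0 <= c -> c <= x -> 2 <= x ->
  2 `^ (2 * M) <= x -> 1 <= y -> y < 1 + (c + x) `^ (4 * M)^-1 -> M * ln y <= ln x.
Proof.
move=> M1 c0 cx x2 xM y1 y_lt.
have x0 : 0 < x by lra.
have s0 : 0 <= (2 * M)^-1 by rewrite invr_ge0; lra.
have root_ge1 : 1 <= x `^ (2 * M)^-1 by rewrite -{1}(powRr0 x); apply: ler_powR; lra.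
have root_le : (c + x) `^ (4 * M)^-1 <= x `^ (2 * M)^-1.
  have -> : (2 * M)^-1 = 2 * (4 * M)^-1 by field; lra.
  rewrite powRrM powR_mulrn ?(ltW x0) //.
  apply: ge0_ler_powR; rewrite ?nnegrE ?invr_ge0 ?sqr_ge0 ?expr2; nra.
have lny_lt : ln y < ln 2 + (2 * M)^-1 * ln x.
  by rewrite -ln_powR -lnM ?posrE ?powR_gt0 // ltr_ln ?posrE ?mulr_gt0 ?powR_gt0; lra.
have : M * ln y <= M * ln 2 + ln x / 2.
  have -> : M * ln 2 + ln x / 2 = M * (ln 2 + (2 * M)^-1 * ln x) by field; lra.
  by apply: ler_wpM2l; lra.
have : 2 * M * ln 2 <= ln x by rewrite -ln_powR ler_ln ?posrE ?powR_gt0.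
lra.
Qed.

Lemma powR_le_of_lt_powR M d y c : 0 <= M -> 0 <= c -> c + 2 <= d -> 0 <= y ->
  d < (ln 2 + d * (y + c)) `^ (M + 2)^-1 -> d `^ M <= y.
Proof.
move=> M0 c0 cd y0.
have d0 : 0 < d by lra.
have ln2_gt0 : 0 < ln (2 : R) by rewrite ln_gt0 //; lra.
have a0 : 0 <= ln 2 + d * (y + c) by rewrite addr_ge0 ?mulr_ge0; lra.
have M2 : 0 < M + 2 by lra.
move=> d_lt; have : d `^ (M + 2) < ln 2 + d * (y + c).
  rewrite -[X in _ < X](powRVK a0 (lt0r_neq0 M2)).
  by apply: gt0_ltr_powR; rewrite ?nnegrE ?powR_ge0 ?(ltW d0).
rewrite powRD ?(gt_eqF d0) ?implybT // powR_mulrn ?(ltW d0) // => a_gt.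
have E1 : 1 <= d `^ M by rewrite -{1}(powRr0 d); apply: ler_powR; lra.
rewrite leNgt; apply/negP => yE.
have : ln 2 + d * (y + c) < d * (2 + c) * d `^ M.
  have := ln2_le1; have := mulr_ge0 (ltW d0) c0; nra.
have : d * (2 + c) * d `^ M <= d `^ M * d ^+ 2.
  have : 0 <= d * d `^ M * (d - (2 + c)) by rewrite !mulr_ge0 ?subr_ge0; lra.
  by rewrite expr2; nra.
lra.
Qed.

Lemma lt_powR_of_root_lt x y r : 0 < r -> 0 <= x -> 0 <= y -> x `^ r^-1 < y -> x < y `^ r.
Proof.
move=> r0 x0 y0 lt_y; rewrite -[X in X < _](powRVK x0 (lt0r_neq0 r0)).
by apply: gt0_ltr_powR; rewrite ?nnegrE ?powR_ge0.
Qed.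

Lemma sq_add_root_ln_lt s t eta c : 0 < s -> 0 < t -> 0 < eta -> 0 <= c ->
  exists M, forall D eps, 0 <= D -> 0 < eps < 1 -> M < D + eps^-1 ->
    (c + (2 * ln eps^-1) `^ (s / 4)) ^+ 2 < eta * (D `^ t + (ln eps^-1) `^ s).
Proof.
move=> s0 t0 eta0 c0.
(* With u = (2a)^(s/4) one has eta a^s = 2 k u^4: the square is below k u^4 + B,
   and B is beaten by eta D^t when D is large and by k u^4 when eps is small. *)
pose k := eta / 2 / 2 `^ s.
have k0 : 0 < k by rewrite !divr_gt0 ?powR_gt0.
pose B := (c + 1) ^+ 2 + (c + 1) ^+ 4 / (4 * k).
have B0 : 0 <= B.
  have : 0 <= c + 1 by lra.
  have : 0 <= 4 * k by lra.
  by move=> ? ?; rewrite addr_ge0 ?sqr_ge0 ?divr_ge0 ?exprn_ge0.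
exists ((B / eta) `^ t^-1 + expR ((2 * B / eta) `^ s^-1)) => D eps D0 /andP[eps0 eps1] M_lt.
set a := ln eps^-1.
have a0 : 0 < a by rewrite ln_gt0 // invf_gt1.
have u4 : k * ((2 * a) `^ (s / 4)) ^+ 4 = eta / 2 * a `^ s.
  rewrite -powR_mulrn ?powR_ge0 // -powRrM mulfVK ?powRM ?pnatr_eq0 //; try lra.
  by rewrite /k mulrA divfK // gt_eqF ?powR_gt0.
apply: le_lt_trans (sq_le_quartic c0 k0 (powR_ge0 _ _)) _; rewrite u4 -/B.
have eta_as : 0 <= eta / 2 * a `^ s by rewrite mulr_ge0 ?powR_ge0 ?divr_ge0 ?(ltW eta0).
have eta_Dt : 0 <= eta * D `^ t by rewrite mulr_ge0 ?powR_ge0 ?(ltW eta0).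
suff : B < eta * D `^ t + eta / 2 * a `^ s by rewrite mulrDr; lra.
have [D_gt | D_le] := ltP ((B / eta) `^ t^-1) D.
  suff : B / eta < D `^ t by rewrite ltr_pdivrMr // mulrC; lra.
  by apply: lt_powR_of_root_lt; rewrite // divr_ge0 ?(ltW eta0).
have : (2 * B / eta) `^ s^-1 < a.
  by rewrite -ltr_expR /a lnK ?posrE ?invr_gt0 //; lra.
move=> /lt_powR_of_root_lt; rewrite divr_ge0 ?mulr_ge0 ?(ltW eta0) ?(ltW a0) //.
by move=> /(_ s0 isT isT); rewrite ltr_pdivrMr // mulrC; lra.
Qed.

End RealInequalities.

Lemma EXP_WTP (R : realType) (lam gam : nat -> R) s t :
  EXP_WT lam gam s t <-> forall eta, 0 < eta -> exists M : R, forall d eps,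
    (1 <= d)%N -> 0 < eps < 1 -> M < d%:R + eps^-1 ->
    ln (info_compl lam gam eps d)%:R < eta * (d%:R `^ t + (ln eps^-1) `^ s).
Proof.
have den_gt0 d eps : (1 <= d)%N -> 0 < d%:R `^ t + (ln eps^-1) `^ s.
  by move=> d1; rewrite ltr_wpDr ?powR_ge0 ?powR_gt0 ?ltr0n.
have ratioE d eps : (1 <= d)%N ->
    `|ln (info_compl lam gam eps d)%:R / (d%:R `^ t + (ln eps^-1) `^ s)| =
    ln (info_compl lam gam eps d)%:R / (d%:R `^ t + (ln eps^-1) `^ s).
  by move=> d1; rewrite ger0_norm // divr_ge0 ?ln_natr_ge0 ?(ltW (den_gt0 _ eps d1)).
split=> wt eta /wt [M WM]; exists M => d eps d1 eps01 /(WM d eps d1 eps01);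
  by rewrite ratioE // ltr_pdivrMr ?den_gt0 // mulrC.
Qed.

Lemma noninc_le (R : realType) (f : nat -> R) :
  (forall j, (1 <= j)%N -> f j.+1 <= f j) ->
  forall i j, (1 <= i)%N -> (i <= j)%N -> f j <= f i.
Proof.
move=> f_noninc i j i1 /subnK <-; elim: (j - i)%N => [|n ihn]; first by rewrite add0n.
by rewrite addSn (le_trans _ ihn) // f_noninc // (leq_trans i1) ?leq_addl.
Qed.

Lemma prodr_le_factor (R : realType) d (F : 'I_d -> R) k :
  (forall i, 0 <= F i <= 1) -> \prod_i F i <= F k.
Proof.
move=> F01; rewrite (bigD1 k) //= ler_piMr ?(andP (F01 k)).1 //.
by apply: prodr_ile1 => i _; apply: F01.
Qed.

Section Eigenvalues.
Variables (R : realType) (lam gam : nat -> R).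
Hypothesis lam1 : lam 1%N = 1.
Hypothesis lam_nonneg : forall j, (1 <= j)%N -> 0 <= lam j.
Hypothesis lam_noninc : forall j, (1 <= j)%N -> lam j.+1 <= lam j.
Hypothesis lam_to0 : forall e : R, 0 < e -> exists J : nat, forall j, (J <= j)%N -> lam j < e.
Hypothesis gam1 : gam 1%N <= 1.
Hypothesis gam_pos : forall j, (1 <= j)%N -> 0 < gam j.
Hypothesis gam_noninc : forall j, (1 <= j)%N -> gam j.+1 <= gam j.

Lemma lam_le1 j : (1 <= j)%N -> lam j <= 1.
Proof. by move=> j1; rewrite -lam1 noninc_le. Qed.

Lemma gam_le1 k : (1 <= k)%N -> gam k <= 1.
Proof. by move=> k1; rewrite (le_trans _ gam1) // noninc_le. Qed.

Lemma gam_ge0 k : (1 <= k)%N -> 0 <= gam k.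
Proof. by move=> k1; apply/ltW/gam_pos. Qed.

Lemma lamk_ge0_le1 k j : (1 <= k)%N -> (1 <= j)%N -> 0 <= lamk lam gam k j <= 1.
Proof.
move=> k1 j1; rewrite /lamk; case: eqP => _; first by rewrite ler01 lexx.
by rewrite mulr_ge0 ?mulr_ile1 ?lam_le1 ?gam_le1 ?lam_nonneg ?gam_ge0.
Qed.

Lemma big_eig_coord d eps j (k : 'I_d) :
  big_eig_set lam gam d eps j -> (2 <= j k)%N ->
  eps ^+ 2 < gam k.+1 /\ eps ^+ 2 < lam (j k).
Proof.
move=> [j1 eps_lt] jk2.
have := lt_le_trans eps_lt (prodr_le_factor k (fun i => lamk_ge0_le1 (ltn0Sn i) (j1 i))).
rewrite /lamk gtn_eqF // => eps_lt_k; split; apply: lt_le_trans eps_lt_k _.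
  by rewrite ler_piMr ?gam_ge0 ?lam_le1.
by rewrite ler_piMl ?lam_nonneg ?gam_le1.
Qed.

Lemma big_eig_card_le d eps N K :
  (forall j, (2 <= j)%N -> eps ^+ 2 < lam j -> (j <= N.+1)%N) ->
  (forall k, (k <= d)%N -> eps ^+ 2 < gam k -> (k <= K)%N) ->
  exists2 m, card_is (big_eig_set lam gam d eps) m & (m <= N.+1 ^ K)%N.
Proof.
move=> lamN gamK; apply: card_is_box => j Pj k.
have j1 : (1 <= j k)%N by case: Pj.
split=> [|Kk].
  rewrite j1; case: (ltnP 1 (j k)) => [jk2 | jk1]; last exact: leq_trans jk1 _.
  exact: lamN jk2 (big_eig_coord Pj jk2).2.
apply/eqP; rewrite eqn_leq j1 andbT leqNgt; apply/negP => jk2.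
by have := gamK _ (ltn_ord k) (big_eig_coord Pj jk2).1; rewrite ltnNge Kk.
Qed.

Lemma card_is_info_compl d eps :
  0 < eps -> card_is (big_eig_set lam gam d eps) (info_compl lam gam eps d).
Proof.
move=> eps0; have [J lamJ] := lam_to0 (exprn_gt0 2 eps0).
have [m Pm _] : exists2 m, card_is (big_eig_set lam gam d eps) m & (m <= J.+1 ^ d)%N.
  apply: big_eig_card_le => // j _ lam_gt; rewrite leqW // leqNgt.
  by apply/negP => /ltnW /lamJ; rewrite ltNge (ltW lam_gt).
by rewrite /info_compl (cardP_eq Pm).
Qed.

Lemma info_compl1_ge eps j0 :
  0 < eps -> (1 <= j0)%N -> eps ^+ 2 < gam 1%N * lam j0 ->
  (j0 <= info_compl lam gam eps 1)%N.
Proof.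
move=> eps0 j01 eps_lt.
rewrite -[j0](size_iota 0) -(size_map (fun i => [ffun _ : 'I_1 => i.+1])).
apply: size_le_card_is (card_is_info_compl 1 eps0).
  by rewrite map_inj_uniq ?iota_uniq // => a b /ffunP /(_ ord0); rewrite !ffunE => -[].
move=> x /mapP [i]; rewrite mem_iota add0n => /andP [_ ij0] ->.
split=> [k | ]; first by rewrite ffunE.
rewrite big_ord1 ffunE /lamk; case: eqP => [_ | _].
  by rewrite (lt_le_trans eps_lt) // mulr_ile1 ?lam_le1 ?gam_le1 ?lam_nonneg ?gam_ge0.
by rewrite (lt_le_trans eps_lt) // ler_wpM2l ?noninc_le ?gam_ge0.
Qed.

Lemma exp2_le_info_compl eps d :
  0 < eps -> (1 <= d)%N -> eps ^+ 2 < (gam d * lam 2%N) ^+ d ->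
  (2 ^ d <= info_compl lam gam eps d)%N.
Proof.
move=> eps0 d1 eps_lt.
pose F (f : {ffun 'I_d -> bool}) := [ffun k : 'I_d => (f k : nat).+1].
rewrite -[d in (2 ^ d)%N](card_ord d) -card_bool -card_ffun cardE -(size_map F).
apply: size_le_card_is (card_is_info_compl d eps0).
  rewrite map_inj_uniq ?enum_uniq // => f g /ffunP Ffg; apply/ffunP => k.
  by have := Ffg k; rewrite !ffunE; case: (f k); case: (g k).
have p0 : 0 <= gam d * lam 2%N by rewrite mulr_ge0 ?lam_nonneg ?gam_ge0.
move=> x /mapP [f _ ->]; split=> [k | ]; first by rewrite ffunE.
rewrite (lt_le_trans eps_lt) // -[d in _ ^+ d](card_ord d) -prodr_const.
apply: ler_prod => k _; rewrite p0 ffunE /lamk; case: (f k) => /=.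
  by rewrite ler_wpM2r ?lam_nonneg ?noninc_le.
by rewrite mulr_ile1 ?lam_le1 ?gam_le1 ?lam_nonneg ?gam_ge0.
Qed.

Lemma ln_index_lt_of_EXP_WT s : 0 < s -> EXP_WT lam gam s 1 ->
  exists2 X0 : R, 0 <= X0 & forall j, (1 <= j)%N -> 0 < lam j -> X0 < ln (lam j)^-1 ->
    ln j%:R < 1 + (ln (2 / gam 1%N) + ln (lam j)^-1) `^ s.
Proof.
move=> s0 /EXP_WTP /(_ 1 ltr01) [M WM]; exists `|M| => // j j1 lj0 M_lt_x.
have g0 := gam_pos (leqnn 1); have g1 := gam_le1 (leqnn 1).
set eps := gam 1%N * lam j / 2.
have eps0 : 0 < eps by rewrite divr_gt0 ?mulr_gt0.
have eps_le : eps <= lam j / 2.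
  by rewrite /eps ler_pM2r ?invr_gt0 //; apply: ler_piMl => //; apply: ltW.
have eps1 : eps < 1 by have := lam_le1 j1; lra.
have epsE : ln eps^-1 = ln (2 / gam 1%N) + ln (lam j)^-1.
  by rewrite /eps invf_div invfM mulrA lnM ?posrE ?divr_gt0 ?invr_gt0.
have M_lt : M < 1%:R + eps^-1.
  have : (lam j)^-1 <= eps^-1 by rewrite lef_pV2 ?posrE //; lra.
  have : ln (lam j)^-1 < (lam j)^-1 by rewrite ln_sublinear ?invr_gt0.
  have := ler_norm M; lra.
have /WM := M_lt; rewrite eps0 eps1 => /(_ isT isT).
rewrite mulr1n powR1 mul1r epsE; apply: le_lt_trans.
rewrite ler_ln_natr // info_compl1_ge // /eps sq_half_lt ?mulr_gt0 //.
by rewrite mulr_ile1 ?lam_le1 ?(ltW g0) ?(ltW lj0).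
Qed.

Lemma lam_cond_of_EXP_WT : (forall s, 0 < s -> EXP_WT lam gam s 1) -> lam_cond lam.
Proof.
move=> wt M; pose M' := Num.max M 1.
have M'1 : 1 <= M' by rewrite le_max lexx orbT.
have s0 : 0 < (4 * M')^-1 by rewrite invr_gt0; lra.
have [X0 X00 X0P] := ln_index_lt_of_EXP_WT s0 (wt _ s0).
set c := ln (2 / gam 1%N).
have c0 : 0 <= c.
  have g0 := gam_pos (leqnn 1).
  by apply: ln_ge0; rewrite ler_pdivlMr // mul1r (le_trans gam1) ?ler1n.
pose X := X0 + c + 2 + 2 `^ (2 * M').
have [J lamJ] := lam_to0 (expR_gt0 (- X)).
exists (maxn J (Num.truncn (expR (1 : R))).+1) => j; rewrite geq_max => /andP[Jj ej].
have j1 : (1 <= j)%N by apply: leq_trans ej.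
have := lam_nonneg j1; rewrite le_eqVlt => /orP[/eqP <- | lj0]; [by left | right].
have X2 : 2 <= X by rewrite /X; have := powR_ge0 2 (2 * M'); lra.
have lj1 : lam j < 1 by rewrite (lt_trans (lamJ _ Jj)) // expR_lt1 oppr_lt0; lra.
have X_lt : X < ln (lam j)^-1.
  by rewrite lnV ?posrE // ltrNr -[- X]expRK ltr_ln ?posrE ?expR_gt0 ?lamJ.
have lnj1 : 1 <= ln (j%:R : R).
  have e_lt : expR 1 < (j%:R : R) by rewrite (lt_le_trans (truncnS_gt _)) // ler_nat.
  rewrite -[X in X <= _](expRK 1) ler_ln ?posrE ?expR_gt0 ?(ltW e_lt) //.
  exact: lt_trans (expR_gt0 1) e_lt.
split; first by rewrite lj0.
apply: le_trans (_ : M' * ln (ln j%:R) <= _).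
  by rewrite ler_wpM2r ?le_max ?lexx // ln_ge0.
apply: lnln_le_of_lt_powR (X0P j j1 lj0 _) => //;
  by move: c0 X_lt; rewrite /X /c; have := powR_ge0 2 (2 * M'); lra.
Qed.

Lemma dim_lt_of_EXP_WT s : 0 < lam 2%N -> 0 < s -> EXP_WT lam gam s 2^-1 ->
  exists D : nat, forall d, (D <= d)%N -> (1 <= d)%N ->
    d%:R < (ln 2 + d%:R * (ln (gam d)^-1 + ln (lam 2%N)^-1)) `^ s.
Proof.
move=> l20 s0; have ln2_gt0 : 0 < ln (2 : R) by rewrite ln_gt0 // ltr1n.
move=> /EXP_WTP /(_ (ln 2 / 2)) [|M WM]; first by rewrite divr_gt0.
exists (Num.truncn `|M|).+1 => d Md d1.
have gd0 := gam_pos d1.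
set p := gam d * lam 2%N.
have p0 : 0 < p by rewrite mulr_gt0.
have p1 : p <= 1 by rewrite /p mulr_ile1 ?gam_le1 ?lam_le1 ?(ltW gd0) ?(ltW l20).
have pd1 : p ^+ d <= 1 by rewrite exprn_ile1 ?(ltW p0).
set eps := p ^+ d / 2.
have eps0 : 0 < eps by rewrite divr_gt0 ?exprn_gt0.
have eps1 : eps < 1 by rewrite /eps; lra.
have epsE : ln eps^-1 = ln 2 + d%:R * (ln (gam d)^-1 + ln (lam 2%N)^-1).
  rewrite /eps invf_div lnM ?posrE ?invr_gt0 ?exprn_gt0 // -exprVn lnXn ?invr_gt0 //.
  by rewrite /p invfM lnM ?posrE ?invr_gt0 // mulr_natl.
have M_lt : M < d%:R + eps^-1.
  have : `|M| < d%:R by rewrite (lt_le_trans (truncnS_gt _)) // ler_nat.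
  have := ler_norm M; have : 0 < eps^-1 by rewrite invr_gt0.
  lra.
have /WM := M_lt; rewrite eps0 eps1 epsE => /(_ d1 isT).
set A := _ `^ s => ln_lt.
have : d%:R * ln (2 : R) <= ln (info_compl lam gam eps d)%:R.
  rewrite mulr_natl -lnXn // -natrX ler_ln_natr ?expn_gt0 // exp2_le_info_compl //.
  by rewrite /eps sq_half_lt ?exprn_gt0.
have : d%:R `^ 2^-1 <= (d%:R : R) by rewrite ler1_powR ?ler1n // invf_le1; lra.
move=> root_le ln_ge; have : d%:R * ln 2 < ln 2 / 2 * (d%:R + A).
  apply: le_lt_trans ln_ge (lt_le_trans ln_lt _).
  by apply: ler_wpM2l; [rewrite divr_ge0 ?(ltW ln2_gt0) | lra].
by move=> ?; rewrite -subr_gt0 -(pmulr_rgt0 _ ln2_gt0); lra.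
Qed.

Lemma gam_cond_of_EXP_WT : 0 < lam 2%N ->
  (forall s, 0 < s -> EXP_WT lam gam s 2^-1) -> gam_cond gam.
Proof.
move=> l20 wt M; pose M' := Num.max M 0.
have M'0 : 0 <= M' by rewrite le_max lexx orbT.
have s0 : 0 < (M' + 2)^-1 by rewrite invr_gt0; lra.
have [D DP] := dim_lt_of_EXP_WT l20 s0 (wt _ s0).
have c0 : 0 <= ln (lam 2%N)^-1 by rewrite ln_ge0 // invf_ge1 ?lam_le1.
exists (maxn (maxn D 1) (Num.truncn (ln (lam 2%N)^-1)).+3) => d.
rewrite !geq_max => /andP[/andP[Dd d1] cd].
have cd2 : ln (lam 2%N)^-1 + 2 <= d%:R.
  move: cd; rewrite -(ler_nat R) -addn2 natrD; have := truncnS_gt (ln (lam 2%N)^-1); lra.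
have gd0 := gam_pos d1.
have y0 : 0 <= ln (gam d)^-1 by rewrite ln_ge0 // invf_ge1 ?gam_le1.
have := powR_le_of_lt_powR M'0 c0 cd2 y0 (DP d Dd d1).
have E1 : 1 <= d%:R `^ M' by rewrite -{1}(powRr0 d%:R); apply: ler_powR; rewrite ?ler1n.
move=> E_le; split.
  rewrite ltNge; apply/negP => g1.
  by have := ln_le0 (_ : (gam d)^-1 <= 1); rewrite invf_le1 // => /(_ g1); lra.
apply: le_trans (_ : M' * ln d%:R <= _).
  by apply: ler_wpM2r; rewrite ?ln_natr_ge0 ?le_max ?lexx.
have y_gt0 : 0 < ln (gam d)^-1 := lt_le_trans ltr01 (le_trans E1 E_le).
by rewrite -ln_powR ler_ln ?posrE ?(lt_le_trans ltr01 E1).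
Qed.

Lemma lam_index_le_of_cond M0 Jl eps j : 0 < M0 ->
  (forall j, (Jl <= j)%N ->
    lam j = 0 \/ (0 < lam j < 1 /\ M0 * ln (ln j%:R) <= ln (ln (lam j)^-1))) ->
  0 < eps -> (2 <= j)%N -> eps ^+ 2 < lam j ->
  (j <= maxn Jl (Num.truncn (expR ((2 * ln eps^-1) `^ M0^-1))))%N.
Proof.
move=> M00 lamJ eps0 j2 eps_lt; rewrite leq_max.
case: (ltnP j Jl) => [/ltnW -> // | Jlj]; apply/orP; right.
rewrite truncn_ge_nat ?expR_ge0 //.
case: (lamJ j Jlj) => [lj0 | [/andP[_ lj1] M0_le]].
  by move: eps_lt; rewrite lj0 ltNge sqr_ge0.
have lnj0 : 0 < ln (j%:R : R) by rewrite ln_gt0 // ltr1n.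
rewrite -[j%:R]lnK ?posrE ?ltr0n ?(leq_trans _ j2) // ler_expR.
exact: ltW (lt_root_of_sq_lt M00 lnj0 eps0 eps_lt lj1 M0_le).
Qed.

Lemma gam_index_le_of_cond M0 Jg eps k : 0 < M0 ->
  (forall j, (Jg <= j)%N -> gam j < 1 /\ M0 * ln j%:R <= ln (ln (gam j)^-1)) ->
  0 < eps -> eps ^+ 2 < gam k ->
  (k <= maxn Jg (Num.truncn ((2 * ln eps^-1) `^ M0^-1)))%N.
Proof.
move=> M00 gamJ eps0 eps_lt; rewrite leq_max.
case: (ltnP k Jg) => [/ltnW -> // | Jgk]; apply/orP; right.
have [gk1 M0_le] := gamJ k Jgk.
rewrite truncn_ge_nat ?powR_ge0 //.
case: k eps_lt Jgk gk1 M0_le => [_ _ _ _ | k eps_lt _ gk1 M0_le]; first exact: powR_ge0.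
exact: ltW (lt_root_of_sq_lt M00 (ltr0Sn _ _) eps0 eps_lt gk1 M0_le).
Qed.

Lemma ln_info_compl_le M0 Jg Jl d eps : 0 < M0 ->
  (forall j, (Jg <= j)%N -> gam j < 1 /\ M0 * ln j%:R <= ln (ln (gam j)^-1)) ->
  (forall j, (Jl <= j)%N ->
    lam j = 0 \/ (0 < lam j < 1 /\ M0 * ln (ln j%:R) <= ln (ln (lam j)^-1))) ->
  0 < eps ->
  ln (info_compl lam gam eps d)%:R <=
    (Jg%:R + ln Jl.+2%:R + (2 * ln eps^-1) `^ M0^-1) ^+ 2.
Proof.
move=> M00 gamJ lamJ eps0; set u := (2 * ln eps^-1) `^ M0^-1.
have u0 : 0 <= u := powR_ge0 _ _.
have [m Pm m_le] := @big_eig_card_le d eps _ _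
  (fun j j2 lt => leqW (lam_index_le_of_cond M00 lamJ eps0 j2 lt))
  (fun k _ lt => gam_index_le_of_cond M00 gamJ eps0 lt).
rewrite /info_compl (cardP_eq Pm); apply: le_trans (ln_natr_le_expn _ m_le) _.
set K := maxn Jg _; set N := maxn Jl _.
have K_le : K%:R <= Jg%:R + u.
  have : (K <= Jg + Num.truncn u)%N by rewrite geq_max leq_addr leq_addl.
  by rewrite -(ler_nat R) natrD => /le_trans; apply; rewrite lerD2l truncn_le.
have lnN_le : ln N.+1%:R <= ln Jl.+2%:R + u.
  have eu1 : 1 <= expR u by rewrite -expR0 ler_expR.
  have : (N.+1 <= Jl.+1 + Num.truncn (expR u))%N by rewrite ltnS geq_max leq_addr leq_addl.
  rewrite -(ler_nat R) natrD => N_le.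
  have N_le_exp : N.+1%:R <= Jl.+2%:R * expR u.
    apply: le_trans N_le _; have := truncn_le (expR u); rewrite expR_ge0 => tr_le.
    have : 0 <= Jl.+1%:R * (expR u - 1) :> R by rewrite mulr_ge0 ?subr_ge0.
    rewrite [Jl.+2%:R]mulrSr; nra.
  by rewrite -[u]expRK -lnM ?posrE ?expR_gt0 // ler_ln ?posrE ?mulr_gt0 ?expR_gt0 ?ltr0Sn.
rewrite expr2; apply: ler_pM; rewrite ?ler0n ?ln_natr_ge0 //.
  by rewrite (le_trans K_le) // lerD2r lerDl ln_natr_ge0.
by rewrite (le_trans lnN_le) // lerD2r lerDr ler0n.
Qed.

End Eigenvalues.

Theorem theorem2 (R : realType) (lam gam : nat -> R)
  (lam1 : lam 1%N = 1)
  (lam2 : 0 < lam 2%N)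
  (lam_nonneg : forall j : nat, (1 <= j)%N -> 0 <= lam j)
  (lam_noninc : forall j : nat, (1 <= j)%N -> lam j.+1 <= lam j)
  (lam_to0 : forall e : R, 0 < e -> exists J : nat, forall j : nat, (J <= j)%N -> lam j < e)
  (gam1 : gam 1%N <= 1)
  (gam_pos : forall j : nat, (1 <= j)%N -> 0 < gam j)
  (gam_noninc : forall j : nat, (1 <= j)%N -> gam j.+1 <= gam j) :
  EXP_UWT lam gam <-> (lam_cond lam /\ gam_cond gam).
Proof.
split=> [UWT | [lamC gamC] s t s0 t0].
  split.
    apply: (lam_cond_of_EXP_WT lam1 lam_nonneg lam_noninc lam_to0 gam1 gam_pos gam_noninc).
    by move=> s s0; apply: UWT.
  apply: (gam_cond_of_EXP_WT lam1 lam_nonneg lam_noninc lam_to0 gam1 gam_pos gam_noninc lam2).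
  by move=> s s0; apply: UWT; rewrite ?invr_gt0.
have M00 : 0 < 4 / s by rewrite divr_gt0.
have [Jg gamJ] := gamC (4 / s); have [Jl lamJ] := lamC (4 / s).
apply/EXP_WTP => eta eta0.
have [|M MP] := @sq_add_root_ln_lt R s t eta (Jg%:R + ln Jl.+2%:R) s0 t0 eta0.
  by rewrite addr_ge0 ?ln_natr_ge0.
exists M => d eps d1 /[dup] eps01 /andP[eps0 _] M_lt.
apply: le_lt_trans (MP _ _ (ler0n _ _) eps01 M_lt).
by rewrite -[s / 4]invf_div; apply: ln_info_compl_le.
Qed.
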